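(* Let $m\subseteq\{a\}^*\times\{a,b,\#\}^*$ be the relation $\{(a^n,w\#w)\mid n\ge0,\ w\in\{a,b\}^*,\ |w|=n\}$. Then $m$ is not realized by any (nondeterministic) two-way generalized sequential machine.
   Context: A 2gsm is $M=(Q,\Sigma_1,\Sigma_2,\delta,q_{in},q_f)$ with finite state set $Q$ and finite instruction set $\delta$ of instructions $(p,\sigma,q_1,\alpha_1,\epsilon_1,q_0,\alpha_0,\epsilon_0)$, $p\in Q\setminus\{q_f\}$, $\sigma\in\Sigma_1\cup\{\vdash,\dashv\}$, $q_i\in Q$, $\alpha_i\in\Sigma_2^*$, $\epsilon_i\in\{-1,0,+1\}$. On input $w$ the read-only tape contains $\vdash w\dashv$ at positions $0,\dots,|w|+1$; the machine starts in $q_{in}$ at position $0$. In state $p$ it may execute any instruction starting with $p$: if the scanned symbol is $\sigma$ it enters $q_1$, appends $\alpha_1$ to the one-way output tape and moves by $\epsilon_1$, otherwise it does so with $(q_0,\alpha_0,\epsilon_0)$; the head may not leave the tape. $M$ realizes the relation of all $(w,z)$ for which some computation reaches $q_f$ having written $z$. *)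

From Stdlib Require Import List.
From HB Require Import structures.
From mathcomp Require Import all_boot.
Set Implicit Arguments. Unset Strict Implicit. Unset Printing Implicit Defensive.

Inductive tsym (S : Type) := LEnd | REnd | Sym of S.
Arguments LEnd {S}. Arguments REnd {S}.

Definition tsym_eq {S : eqType} (x y : tsym S) : bool :=
  match x, y with
  | LEnd, LEnd => true | REnd, REnd => true
  | Sym a, Sym b => a == b | _, _ => false end.

Inductive move := MLeft | MStay | MRight.

Record instr (Q S1 S2 : Type) := Instr {
  i_p : Q; i_sigma : tsym S1;
  i_q1 : Q; i_alpha1 : seq S2; i_eps1 : move;
  i_q0 : Q; i_alpha0 : seq S2; i_eps0 : move }.

Record gsm2 (Q : finType) (S1 S2 : Type) := Gsm2 {
  delta : seq (instr Q S1 S2);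
  q_in : Q;
  q_f : Q }.

Definition gsm2_wf (Q : finType) S1 S2 (M : gsm2 Q S1 S2) : Prop :=
  forall d, In d (delta M) -> i_p d != q_f M.

(* Contents of the tape |- w -| at position i (0 .. |w|+1). *)
Definition tape {S : Type} (w : seq S) (i : nat) : tsym S :=
  if i == 0 then LEnd
  else if i <= size w then
    (match drop i.-1 w with x :: _ => Sym x | [::] => REnd end)
  else REnd.

Definition do_move (n i : nat) (e : move) : option nat :=
  match e with
  | MLeft => if i == 0 then None else Some i.-1
  | MStay => Some i
  | MRight => if i < n.+1 then Some i.+1 else None
  end.

(* Configurations: (state, head position, output written so far). *)
Section Semantics.
Variables (Q : finType) (S1 : eqType) (S2 : Type) (M : gsm2 Q S1 S2).

Definition step (w : seq S1) (c c' : Q * nat * seq S2) : Prop :=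
  let: (p, i, z) := c in
  exists2 d, In d (delta M) &
    i_p d = p /\
    let: (q, alpha, e) :=
      if tsym_eq (tape w i) (i_sigma d)
      then (i_q1 d, i_alpha1 d, i_eps1 d)
      else (i_q0 d, i_alpha0 d, i_eps0 d) in
    exists2 i', do_move (size w) i e = Some i' & c' = (q, i', z ++ alpha).

Inductive reach (w : seq S1) : Q * nat * seq S2 -> Q * nat * seq S2 -> Prop :=
  | reach_refl c : reach w c c
  | reach_step c c' c'' : step w c c' -> reach w c' c'' -> reach w c c''.

Definition gsm2_rel (w : seq S1) (z : seq S2) : Prop :=
  exists i, reach w (q_in M, 0, [::]) (q_f M, i, z).

End Semantics.

Definition realizes (Q : finType) (S1 : eqType) S2 (M : gsm2 Q S1 S2)
  (R : seq S1 -> seq S2 -> Prop) : Prop :=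
  forall w z, gsm2_rel M w z <-> R w z.

Inductive in_a := ia.
Definition in_a_eqb (x y : in_a) : bool := true.
Lemma in_a_eqP : Equality.axiom in_a_eqb.
Proof. by case; case; constructor. Qed.
HB.instance Definition _ := hasDecEq.Build in_a in_a_eqP.

Inductive out_abh := oa | ob | ohash.
Inductive letter_ab := la | lb.
Definition emb (x : letter_ab) : out_abh := if x is la then oa else ob.

Definition m_rel (u : seq in_a) (z : seq out_abh) : Prop :=
  exists w : seq letter_ab, size w = size u /\
    z = map emb w ++ ohash :: map emb w.

(* Run the machine on a^n and let it output w#w. When # is written, the output
   is w#y with y a suffix of the output of a single instruction; the rest of
   the run only appends to the output and works just as well from any
   configuration with the same state, head position and y. There are at most
   |Q| (n + 2) c such triples, c being the number of suffixes of instruction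
   outputs, but 2^n words w of length n. For large n two distinct words w, w'
   share a triple, and grafting the second half of the run producing w'#w'
   onto the first half of the run producing w#w yields the output w#w'. *)

From HB Require Import structures.
From mathcomp Require Import all_boot.
From mathcomp Require Import zify.
From Stdlib Require Import ClassicalEpsilon.

Set Implicit Arguments. Unset Strict Implicit. Unset Printing Implicit Defensive.

Lemma split_first (T : eqType) (h : T) (a : seq T) : h \in a ->
  exists x y, a = x ++ h :: y /\ h \notin x.
Proof.
move=> ha; exists (take (index h a) a), (drop (index h a).+1 a); split.
- by rewrite -drop_index // cat_take_drop.
- by apply/negP => /index_ltn; rewrite ltnn.
Qed.

Lemma catsI (T : Type) (s s1 s2 : seq T) : s ++ s1 = s ++ s2 -> s1 = s2.
Proof. by move/(congr1 (drop (size s))); rewrite !drop_size_cat. Qed.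

Lemma leq_card_rel (A B : finType) (R : A -> B -> Prop) :
  (forall a, exists b, R a b) -> (forall a a' b, R a b -> R a' b -> a = a') ->
  #|A| <= #|B|.
Proof.
move=> R_total R_inj.
pose f a := proj1_sig (constructive_indefinite_description _ (R_total a)).
have Rf a : R a (f a) by rewrite /f; case: constructive_indefinite_description.
by apply: (leq_card f) => a a' fE; apply: (R_inj _ _ (f a) (Rf a)); rewrite fE.
Qed.

Lemma exp2_gt_linear c : exists n, c * n.+2 < 2 ^ n.
Proof.
have grow k : (k + 4 + (k + 4)).+2 < 2 ^ (k + 4).
  by elim: k => [|k IH] //; rewrite addSn expnS; lia.
exists (c + 4 + (c + 4)); rewrite expnD; apply: ltn_mul (grow c).
exact: leq_ltn_trans (leq_addr 4 c) (ltn_expl _ (isT : 1 < 2)).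
Qed.

Lemma do_move_le n i e j : i <= n.+1 -> do_move n i e = Some j -> j <= n.+1.
Proof.
case: e => /= [|_ [<-] //|].
- by case: ifP => // _ le_i [<-]; apply: leq_trans (leq_pred _) le_i.
- by case: ifP => // lt_i _ [<-].
Qed.

Section Runs.
Variables (Q : finType) (S1 S2 : eqType) (M : gsm2 Q S1 S2).

Definition instr_outputs : seq (seq S2) :=
  flatten [seq [:: i_alpha1 d; i_alpha0 d] | d <- delta M].

Definition output_suffixes : seq (seq S2) :=
  flatten [seq [seq drop k a | k <- iota 0 (size a).+1] | a <- instr_outputs].

Lemma instr_outputsP d : List.In d (delta M) ->
  i_alpha1 d \in instr_outputs /\ i_alpha0 d \in instr_outputs.
Proof.
rewrite /instr_outputs; elim: (delta M) => [|d' l IH] //= [->|/IH[]].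
- by rewrite !inE !eqxx orbT.
- by move=> out1 out0; rewrite !inE out1 out0 !orbT.
Qed.

Lemma output_suffixesP a k :
  a \in instr_outputs -> drop k a \in output_suffixes.
Proof.
move=> a_out; apply/flattenP; exists [seq drop k a | k <- iota 0 (size a).+1].
  by apply/mapP; exists a.
apply/mapP; exists (minn k (size a)); first by rewrite mem_iota ltnS geq_minr.
by rewrite /minn; case: ltnP => // le_a_k; rewrite drop_size drop_oversize.
Qed.

Lemma stepE w p i z c : step M w (p, i, z) c ->
  exists q j a, [/\ c = (q, j, z ++ a), a \in instr_outputs,
    forall z', step M w (p, i, z') (q, j, z' ++ a)
    & i <= (size w).+1 -> j <= (size w).+1].
Proof.
case=> d d_in [d_p]; have [out1 out0] := instr_outputsP d_in.
case E: (tsym_eq _ _) => -[j mv ->].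
- exists (i_q1 d), j, (i_alpha1 d); split => // [z'|le_i].
    by exists d => //; split => //; rewrite E; exists j.
  exact: do_move_le le_i mv.
- exists (i_q0 d), j, (i_alpha0 d); split => // [z'|le_i].
    by exists d => //; split => //; rewrite E; exists j.
  exact: do_move_le le_i mv.
Qed.

Lemma reach_trans w c1 c2 c3 :
  reach M w c1 c2 -> reach M w c2 c3 -> reach M w c1 c3.
Proof. by elim=> // c c' c'' st _ IH /IH; apply: reach_step st. Qed.

Lemma reach_output_suffix w p i z q j z2 :
  reach M w (p, i, z) (q, j, z2) ->
  exists s, z2 = z ++ s /\ forall z', reach M w (p, i, z') (q, j, z' ++ s).
Proof.
move Ec: (p, i, z) => c1; move Ec2: (q, j, z2) => c2 r.
elim: r p i z Ec Ec2 => [c0|c0 c' c'' st _ IH] p i z.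
  move=> <- [-> -> ->]; exists [::]; split => [|z']; rewrite cats0 //.
  exact: reach_refl.
move=> Ec Ec2; subst c0; have [q1 [j1 [a [Ec' _ st' _]]]] := stepE st.
subst c'; have [s [-> r']] := IH _ _ _ erefl Ec2.
exists (a ++ s); split => [|z']; first by rewrite catA.
by apply: reach_step (st' z') _; rewrite catA.
Qed.

Lemma reach_pos_le w p i z q j z2 : reach M w (p, i, z) (q, j, z2) ->
  i <= (size w).+1 -> j <= (size w).+1.
Proof.
move Ec: (p, i, z) => c1; move Ec2: (q, j, z2) => c2 r.
elim: r p i z Ec Ec2 => [c0|c0 c' c'' st _ IH] p i z; first by move=> <- [_ ->].
move=> Ec Ec2 le_i; subst c0; have [q1 [j1 [a [Ec' _ _ le_j1]]]] := stepE st.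
by subst c'; apply: IH erefl Ec2 (le_j1 le_i).
Qed.

Variable h : S2.

Lemma reach_marker w p i z q j u v :
  reach M w (p, i, z) (q, j, u ++ h :: v) -> h \notin z -> h \notin u ->
  exists p' i' y, [/\ y \in output_suffixes,
    reach M w (p, i, z) (p', i', u ++ h :: y)
    & reach M w (p', i', u ++ h :: y) (q, j, u ++ h :: v)].
Proof.
move Ec: (p, i, z) => c1; move Ec2: (q, j, u ++ h :: v) => c2 r.
elim: r p i z Ec Ec2 => [c0|c0 c' c'' st r IH] p i z.
  by move=> <- [_ _ <-]; rewrite mem_cat inE eqxx orbT.
move=> Ec Ec2 h_z h_u; subst c0; have [q1 [j1 [a [Ec' a_out _ _]]]] := stepE st.
subst c' c''; have [h_a|h_a] := boolP (h \in a); last first.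
  have h_za : h \notin z ++ a by rewrite mem_cat negb_or h_z.
  have [p' [i' [y [y_out r1 r2]]]] := IH _ _ _ erefl erefl h_za h_u.
  by exists p', i', y; split => //; apply: reach_step st r1.
have [x [y [Ea h_x]]] := split_first h_a.
have [s [Es _]] := reach_output_suffix r.
have h_zx : h \notin z ++ x by rewrite mem_cat negb_or h_z.
move: Es; rewrite Ea -!catA catA cat_cons => /eqP.
rewrite eqseq_pivot2l // => /andP[/eqP u_zx _].
have zaE : z ++ a = u ++ h :: y by rewrite Ea u_zx -catA.
exists q1, j1, y; split; last by rewrite -zaE.
- have -> : y = drop (size x).+1 a.
    by rewrite Ea -cat_rcons drop_size_cat ?size_rcons.
  exact: output_suffixesP a_out.
- by rewrite -zaE; apply: reach_step st _; apply: reach_refl.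
Qed.

Definition marker_config w u v p i y : Prop :=
  reach M w (q_in M, 0, [::]) (p, i, u ++ h :: y) /\
  exists j, reach M w (p, i, u ++ h :: y) (q_f M, j, u ++ h :: v).

Lemma marker_config_exists w u v : gsm2_rel M w (u ++ h :: v) -> h \notin u ->
  exists p i y, [/\ i < (size w).+2, y \in output_suffixes
                  & marker_config w u v p i y].
Proof.
case=> j r h_u; have [p [i [y [y_out r1 r2]]]] := reach_marker r isT h_u.
exists p, i, y; split => //; first exact: reach_pos_le r1 (leq0n _).
by split => //; exists j.
Qed.

Lemma marker_config_graft w u v u' v' p i y :
  marker_config w u v p i y -> marker_config w u' v' p i y ->
  gsm2_rel M w (u ++ h :: v').
Proof.
move=> [r1 _] [_ [j r2]]; have [s [Es r2s]] := reach_output_suffix r2.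
have -> : v' = y ++ s by move: Es; rewrite -catA => /catsI [].
by exists j; apply: reach_trans r1 _; have := r2s (u ++ h :: y); rewrite -catA.
Qed.

End Runs.

Definition out_abh_eqb (x y : out_abh) : bool :=
  match x, y with oa, oa | ob, ob | ohash, ohash => true | _, _ => false end.
Lemma out_abh_eqP : Equality.axiom out_abh_eqb.
Proof. by do 2 case; constructor. Qed.
HB.instance Definition _ := hasDecEq.Build out_abh out_abh_eqP.

Lemma emb_inj : injective emb.
Proof. by do 2 case. Qed.

Lemma hash_notin_emb (w : seq letter_ab) : ohash \notin map emb w.
Proof. by elim: w => // x w IH; rewrite inE negb_or IH andbT; case: x. Qed.

Lemma m_rel_copy u x y : m_rel u (map emb x ++ ohash :: map emb y) -> x = y.
Proof.
case=> w [_ /eqP]; rewrite eqseq_pivot2l ?hash_notin_emb //.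
by case/andP => /eqP Ex /eqP Ey; apply: (inj_map emb_inj); rewrite Ex Ey.
Qed.

Definition bit_letter (b : bool) : letter_ab := if b then lb else la.

Lemma bit_letter_inj : injective bit_letter.
Proof. by do 2 case. Qed.

Theorem lemma5p2 :
  forall (Q : finType) (M : gsm2 Q in_a out_abh),
    gsm2_wf M -> ~ realizes M m_rel.
Proof.
move=> Q M _ M_m.
pose c := size (output_suffixes M).
have [n lt_n] := exp2_gt_linear (#|Q| * c).
pose w := nseq n ia.
pose word (t : n.-tuple bool) := map emb (map bit_letter t).
pose R t (k : Q * 'I_n.+2 * 'I_c) := marker_config M ohash w (word t) (word t)
  k.1.1 k.1.2 (nth [::] (output_suffixes M) k.2).
suff: 2 ^ n <= #|Q| * n.+2 * c by lia.
rewrite -card_bool -card_tuple -[n.+2]card_ord -[c]card_ord -!card_prod.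
apply: (leq_card_rel (R := R)) => [t | t t' [[p i] l] Rt Rt'].
- have /M_m : m_rel w (word t ++ ohash :: word t).
    by exists (map bit_letter t); rewrite !size_map size_tuple size_nseq.
  case/marker_config_exists/(_ (hash_notin_emb _)) => p [i [y [le_i y_out Ry]]].
  rewrite size_nseq in le_i; have y_lt : index y (output_suffixes M) < c.
    by rewrite index_mem.
  by exists (p, Ordinal le_i, Ordinal y_lt); rewrite /R /= nth_index.
- have /M_m/m_rel_copy := marker_config_graft Rt Rt'.
  by move/(inj_map bit_letter_inj)/val_inj.
Qed.
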